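(* Let $R$ be a $*$-regular ring. Then $R$ is strongly $J$-$*$-clean if and only if $R$ is Boolean.
   Context: All rings are associative with identity. A $*$-ring is a ring $R$ with an involution $*$, i.e. a map $a\mapsto a^*$ with $(a+b)^*=a^*+b^*$, $(ab)^*=b^*a^*$, $(a^* )^*=a$. A projection is an element $e$ with $e^2=e=e^*$. A $*$-ring $R$ is $*$-regular if it is von Neumann regular and the involution is proper; equivalently, for every $x\in R$ there exists a projection $p$ with $xR=pR$. $J(R)$ denotes the Jacobson radical. $R$ is strongly $J$-$*$-clean if every $a\in R$ can be written $a=e+u$ with $e$ a projection, $u\in J(R)$ and $ae=ea$. A ring is Boolean if every element is idempotent. *)

From mathcomp Require Import all_boot all_algebra.
Set Implicit Arguments. Unset Strict Implicit. Unset Printing Implicit Defensive.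
Import GRing.Theory.
Local Open Scope ring_scope.

Definition is_involution (R : pzRingType) (star : R -> R) : Prop :=
  [/\ forall a b, star (a + b) = star a + star b,
      forall a b, star (a * b) = star b * star a
    & forall a, star (star a) = a].

Definition is_projection (R : pzRingType) (star : R -> R) (e : R) : Prop :=
  e * e = e /\ star e = e.

Definition vn_regular (R : pzRingType) : Prop :=
  forall x : R, exists y : R, x * y * x = x.

Definition proper_involution (R : pzRingType) (star : R -> R) : Prop :=
  forall x : R, star x * x = 0 -> x = 0.

Definition star_regular (R : pzRingType) (star : R -> R) : Prop :=
  vn_regular R /\ proper_involution star.

Definition left_ideal (R : pzRingType) (I : R -> Prop) : Prop :=
  [/\ I 0, forall x y, I x -> I y -> I (x + y)
    & forall r x, I x -> I (r * x)].

Definition maximal_left_ideal (R : pzRingType) (M : R -> Prop) : Prop :=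
  [/\ left_ideal M, ~ M 1 &
      forall I : R -> Prop, left_ideal I -> ~ I 1 ->
        (forall x, M x -> I x) -> forall x, I x -> M x].

Definition jacobson (R : pzRingType) (x : R) : Prop :=
  forall M : R -> Prop, maximal_left_ideal M -> M x.

Definition strongly_J_star_clean (R : pzRingType) (star : R -> R) : Prop :=
  forall a : R, exists e u : R,
    [/\ is_projection star e, jacobson u, a = e + u & a * e = e * a].

Definition boolean_ring (R : pzRingType) : Prop := forall x : R, x * x = x.

(** In a von Neumann regular ring the Jacobson radical is zero: if [u = u y u]
    lies in [J(R)] then so does the idempotent [y u], and an idempotent [f] of
    [J(R)] vanishes because [1 - f] is left invertible.  Hence a decomposition
    [a = e + u] forces [a = e], an idempotent.  Conversely a Boolean ring is
    commutative of characteristic 2, and a proper involution on it is the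
    identity: for [z = p (1 - star p)] one gets
    [star z * z = star p * p * (1 - p) * (1 - star p) = 0], so [p = p * star p],
    whence [star p = star p * p = p].  Thus every [a] is a projection and
    [a = a + 0] is the required decomposition. *)
From mathcomp Require Import all_boot all_algebra.
From mathcomp Require Import boolp classical_sets.
Set Implicit Arguments.
Unset Strict Implicit.
Unset Printing Implicit Defensive.
Import GRing.Theory.
Local Open Scope classical_set_scope.
Local Open Scope ring_scope.

Section JacobsonRadical.
Variable R : pzRingType.

Definition proper_left_ideal (I : R -> Prop) : Prop := left_ideal I /\ ~ I 1.

Lemma proper_left_ideal_sub_maximal (I : R -> Prop) : proper_left_ideal I ->
  exists M, maximal_left_ideal M /\ (forall x, I x -> M x).
Proof.
move=> [Iid I1].
(* Zorn is applied to the sets [K] with [K `|` I] proper: the empty chain then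
   has the upper bound [set0], whose union with [I] is [I] itself. *)
pose P K := proper_left_ideal (K `|` I).
have [A [[AIid AI1] Amax]] : exists A, P A /\ forall B, A `<` B -> ~ P B.
  apply: Zorn_bigcup => F FP Ftot.
  pose U := \bigcup_(X in F) X `|` I.
  have common x y : U x -> U y ->
      exists K, [/\ proper_left_ideal K, K `<=` U, K x & K y].
    have lift X : F X -> X `|` I `<=` U by move=> FX z [Xz|Iz]; [left; exists X|right].
    move=> [[X FX Xx]|Ix] [[Y FY Yy]|Iy].
    - have [XY|YX] := Ftot _ _ FX FY.
      + by exists (Y `|` I); split; [exact: FP|exact: lift|left; apply: XY|left].
      + by exists (X `|` I); split; [exact: FP|exact: lift|left|left; apply: YX].
    - by exists (X `|` I); split; [exact: FP|exact: lift|left|right].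
    - by exists (Y `|` I); split; [exact: FP|exact: lift|right|left].
    - by exists I; split=> // z Iz; right.
  rewrite /P /proper_left_ideal -/U; split; first split.
  - by right; case: Iid.
  - move=> x y Ux Uy; have [K [[[_ KD _] _] KU Kx Ky]] := common x y Ux Uy.
    exact/KU/KD.
  - move=> r x Ux; have [K [[[_ _ KM] _] KU Kx _]] := common x x Ux Ux.
    exact/KU/KM.
  - by move=> U1; have [K [[_ K1] _ /K1]] := common 1 1 U1 U1.
exists (A `|` I); split=> [|x Ix]; last by right.
split=> // J Jid J1 AJ x Jx; apply: contrapT => nAx.
apply: (Amax J).
  by split=> [y Ay|JA]; [apply: AJ; left|apply/nAx; left; apply: JA].
by rewrite /P (proj2 (setUidPl _ _)) // => y Iy; apply: AJ; right.
Qed.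

Lemma jacobson0 : jacobson (0 : R).
Proof. by move=> M [[]]. Qed.

Lemma jacobson_mull (r u : R) : jacobson u -> jacobson (r * u).
Proof. by move=> Ju M Mmax; have [[_ _ MM] _ _] := Mmax; apply: MM; exact: Ju. Qed.

Lemma jacobson_subr_left_unit (u : R) : jacobson u -> exists s, s * (1 - u) = 1.
Proof.
move=> Ju; pose I r := exists s, r = s * (1 - u).
apply: contrapT => nI1.
have Iid : left_ideal I.
  split; first by exists 0; rewrite mul0r.
  - by move=> _ _ [s ->] [t ->]; exists (s + t); rewrite mulrDl.
  - by move=> r _ [s ->]; exists (r * s); rewrite mulrA.
have [M [Mmax IM]] : exists M, maximal_left_ideal M /\ (forall x, I x -> M x).
  by apply: proper_left_ideal_sub_maximal; split=> // -[s s1]; apply: nI1; exists s.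
have [[_ MD _] M1 _] := Mmax; apply: M1.
rewrite -(subrK u 1); apply: MD; last exact: Ju.
by apply: IM; exists 1; rewrite mul1r.
Qed.

Lemma jacobson_idem_eq0 (f : R) : f * f = f -> jacobson f -> f = 0.
Proof.
move=> ff /jacobson_subr_left_unit [s sf].
by rewrite -[f]mul1r -sf -mulrA mulrBl mul1r ff subrr mulr0.
Qed.

Lemma vn_regular_jacobson_eq0 (u : R) : vn_regular R -> jacobson u -> u = 0.
Proof.
move=> reg Ju; have [y uyu] := reg u.
have yu0 : y * u = 0.
  apply: jacobson_idem_eq0; last exact: jacobson_mull.
  by rewrite -mulrA [u * (y * u)]mulrA uyu.
by rewrite -uyu -mulrA yu0 mulr0.
Qed.

End JacobsonRadical.

Section BooleanRing.
Variable R : pzRingType.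
Hypothesis boolR : boolean_ring R.

Lemma boolean_anticomm (x y : R) : x * y + y * x = 0.
Proof.
apply: (addrI x); apply: (addIr y).
by rewrite addr0 -[x + y]boolR mulrDl !mulrDr !boolR !addrA.
Qed.

Lemma boolean_addrr (x : R) : x + x = 0.
Proof. by have := boolean_anticomm x x; rewrite boolR. Qed.

Lemma boolean_comm (x y : R) : x * y = y * x.
Proof.
move/eqP: (boolean_anticomm x y); rewrite addr_eq0 => /eqP ->.
by apply/eqP; rewrite eq_sym -addr_eq0 boolean_addrr.
Qed.

End BooleanRing.

Section Involution.
Variables (R : pzRingType) (star : R -> R).
Hypothesis starR : is_involution star.

Lemma involution0 : star 0 = 0.
Proof.
have [sD _ _] := starR; apply: (addrI (star 0)).
by rewrite -sD !addr0.
Qed.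

Lemma involutionN (x : R) : star (- x) = - star x.
Proof.
have [sD _ _] := starR.
by apply/eqP; rewrite -subr_eq0 opprK -sD addNr involution0.
Qed.

Lemma involution1 : star 1 = 1.
Proof.
have [_ sM sK] := starR.
by have := congr1 star (mulr1 (star 1)); rewrite sM sK mulr1.
Qed.

Lemma boolean_proper_involution_id (x : R) :
  boolean_ring R -> proper_involution star -> star x = x.
Proof.
move=> boolR properR; have [sD sM sK] := starR.
have mul_star p : p * star p = p.
  have z0 : star (p * (1 - star p)) * (p * (1 - star p)) = 0.
    rewrite sM sD involutionN involution1 sK mulrA -[(1 - p) * star p * p]mulrA.
    rewrite [star p * p](boolean_comm boolR) !mulrA mulrBl mul1r boolR subrr.
    by rewrite !mul0r.
  by apply/eqP; rewrite eq_sym -subr_eq0 -{1}[p]mulr1 -mulrBr; apply/eqP/properR.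
by rewrite -[RHS]mul_star -[LHS]mul_star sK boolean_comm.
Qed.

End Involution.

Lemma strongly_J_star_clean_boolean (R : pzRingType) (star : R -> R) :
  vn_regular R -> strongly_J_star_clean star -> boolean_ring R.
Proof.
move=> reg clean a; have [e [u [[ee _] Ju -> _]]] := clean a.
by rewrite (vn_regular_jacobson_eq0 reg Ju) addr0.
Qed.

Lemma boolean_strongly_J_star_clean (R : pzRingType) (star : R -> R) :
  is_involution star -> proper_involution star ->
  boolean_ring R -> strongly_J_star_clean star.
Proof.
move=> starR properR boolR a; exists a, 0; split.
- by split; [exact: boolR|exact: boolean_proper_involution_id].
- exact: jacobson0.
- by rewrite addr0.
- by [].
Qed.

Theorem corollary2p9 (R : pzRingType) (star : R -> R) :
  is_involution star -> star_regular star ->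
  (strongly_J_star_clean star <-> boolean_ring R).
Proof.
move=> starR [reg properR]; split.
- exact: strongly_J_star_clean_boolean.
- exact: boolean_strongly_J_star_clean.
Qed.
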